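(* Let $\mathbf{L}\colon\mathbb{R}^n\times\mathbb{R}^m\to\mathbb{R}$ be convex-concave and $L$-smooth, and write $\mathbb{A}=\nabla_{\pm}\mathbf{L}$. Fix $N\ge1$ and $0<\alpha\le\frac1L$. Given $x_0\in\mathbb{R}^n\times\mathbb{R}^m$ and $z_0=0$, define for $k=0,1,\dots,N-1$ (Dual Fast Extragradient) \[ \begin{aligned} x_{k+1/2}&=x_k-\alpha z_k-\alpha\mathbb{A}x_k,\\ x_{k+1}&=x_{k+1/2}-\tfrac{N-k-1}{N-k}\,\alpha\left(\mathbb{A}x_{k+1/2}-\mathbb{A}x_k\right),\\ z_{k+1}&=\tfrac{N-k-1}{N-k}\,z_k-\tfrac{1}{N-k}\,\mathbb{A}x_{k+1/2}. \end{aligned} \] Then for every saddle point $x_\star$ of $\mathbf{L}$ (equivalently $\nabla_\pm\mathbf{L}(x_\star)=0$), \[ \|\nabla\mathbf{L}(x_N)\|^2=\|\mathbb{A}x_N\|^2\le\frac{4\|x_0-x_\star\|^2}{\alpha^2N^2}. \]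
   Context: $\mathbf{L}$ is convex-concave if $\mathbf{L}(\cdot,v)$ is convex for each $v$ and $\mathbf{L}(u,\cdot)$ is concave for each $u$; it is $L$-smooth if differentiable with $L$-Lipschitz gradient. The saddle operator is $\nabla_\pm\mathbf{L}(u,v)=(\nabla_u\mathbf{L}(u,v),-\nabla_v\mathbf{L}(u,v))$, with joint variable $x=(u,v)$. *)

From HB Require Import structures.
From mathcomp Require Import all_boot all_order all_algebra.
From mathcomp Require Export reals.
Set Implicit Arguments. Unset Strict Implicit. Unset Printing Implicit Defensive.
Import Order.TTheory GRing.Theory Num.Theory.
Local Open Scope ring_scope.

Section Defs.
Variable R : realType.

Definition dotv (k : nat) (u v : 'rV[R]_k) : R := \sum_(i < k) u 0 i * v 0 i.
Definition enorm (k : nat) (u : 'rV[R]_k) : R := Num.sqrt (dotv u u).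

Definition is_gradient (k : nat) (f : 'rV[R]_k -> R) (g x : 'rV[R]_k) : Prop :=
  forall eps : R, 0 < eps -> exists2 delta : R, 0 < delta &
    forall h : 'rV[R]_k, enorm h < delta ->
      `|f (x + h) - f x - dotv g h| <= eps * enorm h.

Definition convex_fun (k : nat) (f : 'rV[R]_k -> R) : Prop :=
  forall (a b : 'rV[R]_k) (t : R), 0 <= t -> t <= 1 ->
    f (t *: a + (1 - t) *: b) <= t * f a + (1 - t) * f b.

Definition concave_fun (k : nat) (f : 'rV[R]_k -> R) : Prop :=
  convex_fun (fun x => - f x).

Definition convex_concave (n m : nat) (L : 'rV[R]_n -> 'rV[R]_m -> R) : Prop :=
  (forall v, convex_fun (fun u => L u v)) /\ (forall u, concave_fun (fun v => L u v)).

Definition joint (n m : nat) (L : 'rV[R]_n -> 'rV[R]_m -> R) (x : 'rV[R]_(n + m)) : R :=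
  L (lsubmx x) (rsubmx x).

(* saddle operator from the joint gradient G : grad_pm = (grad_u, - grad_v) *)
Definition saddle_op (n m : nat) (G : 'rV[R]_(n + m) -> 'rV[R]_(n + m))
  (x : 'rV[R]_(n + m)) : 'rV[R]_(n + m) :=
  row_mx (lsubmx (G x)) (- rsubmx (G x)).

Definition saddle_point (n m : nat) (L : 'rV[R]_n -> 'rV[R]_m -> R)
  (xs : 'rV[R]_(n + m)) : Prop :=
  forall u v, L (lsubmx xs) v <= L (lsubmx xs) (rsubmx xs) /\
              L (lsubmx xs) (rsubmx xs) <= L u (rsubmx xs).

Fixpoint dfe (p : nat) (A : 'rV[R]_p -> 'rV[R]_p) (alpha : R) (N : nat)
  (x0 : 'rV[R]_p) (k : nat) : 'rV[R]_p * 'rV[R]_p :=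
  match k with
  | 0 => (x0, 0)
  | k'.+1 =>
      let xz := dfe A alpha N x0 k' in
      let x := xz.1 in let z := xz.2 in
      let xh := x - alpha *: z - alpha *: A x in
      let c := (N - k' - 1)%:R / (N - k')%:R in
      (xh - (c * alpha) *: (A xh - A x), c *: z - ((N - k')%:R)^-1 *: A xh)
  end.

End Defs.

(** The iterates of Dual Fast Extragradient keep the potential
    [Psi_k = alpha <x_k - x_N, z_k + A x_N> / (N - k) - alpha^2/2 |z_k + A x_N|^2]
    nonincreasing: one step changes it by
    [(|x_(k+1/2) - x_k|^2 - alpha^2 |A x_(k+1/2) - A x_k|^2) / (2 (N-k)^2)], which is
    nonnegative since [A] is [1/alpha]-Lipschitz, plus a multiple of the monotonicity
    gap [<A x_N - A x_(k+1/2), x_N - x_(k+1/2)>]. The last potential is nonnegative for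
    the same reason, hence so is [Psi_0]; completing the square in [Psi_0] against
    [<A x_N, x_N - x_star> >= 0] yields the rate. Monotonicity of [A = grad_pm L]
    follows from the gradient inequalities for the convex and the concave part. *)
From mathcomp Require Import all_boot all_order all_algebra reals.
From mathcomp.algebra_tactics Require Import ring lra.
From mathcomp Require Import zify.
Set Implicit Arguments. Unset Strict Implicit. Unset Printing Implicit Defensive.
Import Order.TTheory GRing.Theory Num.Theory.
Local Open Scope ring_scope.

Section InnerProduct.
Variable R : realType.
Implicit Types (p n m : nat).

Ltac by_coords :=
  rewrite /dotv; do 4 rewrite ?mulr_sumr ?mulr_suml -?sumrN -?big_split /=;
  apply: eq_bigr => i _; rewrite !mxE.

Lemma dotv_ge0 p (u : 'rV[R]_p) : 0 <= dotv u u.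
Proof. by apply: sumr_ge0 => i _; rewrite -expr2 sqr_ge0. Qed.

Lemma enorm_ge0 p (u : 'rV[R]_p) : 0 <= enorm u.
Proof. exact: sqrtr_ge0. Qed.

Lemma enorm_sqr p (u : 'rV[R]_p) : enorm u ^+ 2 = dotv u u.
Proof. by rewrite /enorm sqr_sqrtr // dotv_ge0. Qed.

Lemma dotvZr p (u v : 'rV[R]_p) t : dotv u (t *: v) = t * dotv u v.
Proof. by by_coords; ring. Qed.

Lemma dotvNl p (u v : 'rV[R]_p) : dotv (- u) v = - dotv u v.
Proof. by by_coords; ring. Qed.

Lemma dotvBl p (u v w : 'rV[R]_p) : dotv (u - v) w = dotv u w - dotv v w.
Proof. by by_coords; ring. Qed.

Lemma dotvBr p (u v w : 'rV[R]_p) : dotv u (v - w) = dotv u v - dotv u w.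
Proof. by by_coords; ring. Qed.

Lemma dotv0r p (u : 'rV[R]_p) : dotv u 0 = 0.
Proof. by rewrite /dotv big1 // => i _; rewrite mxE mulr0. Qed.

Lemma dotv_row_mx n m (a c : 'rV[R]_n) (b d : 'rV[R]_m) :
  dotv (row_mx a b) (row_mx c d) = dotv a c + dotv b d.
Proof.
rewrite /dotv big_split_ord /=; congr (_ + _); apply: eq_bigr => i _;
  by rewrite ?row_mxEl ?row_mxEr.
Qed.

Lemma enormZ p (u : 'rV[R]_p) t : 0 <= t -> enorm (t *: u) = t * enorm u.
Proof.
move=> t_ge0; rewrite /enorm.
have -> : dotv (t *: u) (t *: u) = t ^+ 2 * dotv u u by by_coords; ring.
by rewrite sqrtrM ?sqr_ge0 // sqrtr_sqr ger0_norm.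
Qed.

Lemma enorm_row_mxN n m (a : 'rV[R]_n) (b : 'rV[R]_m) :
  enorm (row_mx a (- b)) = enorm (row_mx a b).
Proof.
rewrite /enorm !dotv_row_mx; congr (Num.sqrt (_ + _)).
by by_coords; ring.
Qed.

Definition dfe_potential p (alpha r : R) (X g x z : 'rV[R]_p) : R :=
  alpha * dotv (x - X) (z + g) / r - alpha ^+ 2 / 2 * dotv (z + g) (z + g).

Lemma dfe_potential_step p (alpha r : R) (X g x z y ax ay : 'rV[R]_p) :
  r != 0 -> r - 1 != 0 -> y = x - alpha *: z - alpha *: ax ->
  dfe_potential alpha r X g x z =
    dfe_potential alpha (r - 1) X g
      (y - ((r - 1) / r * alpha) *: (ay - ax)) ((r - 1) / r *: z - r^-1 *: ay)
    + (dotv (y - x) (y - x) - alpha ^+ 2 * dotv (ay - ax) (ay - ax)) / (2 * r ^+ 2)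
    + alpha * dotv (g - ay) (X - y) / (r * (r - 1)).
Proof.
move=> r_neq0 r1_neq0 ->; rewrite /dfe_potential.
by by_coords; field; rewrite r_neq0 r1_neq0.
Qed.

Lemma dfe_potential_last p (alpha : R) (x z y ax ay : 'rV[R]_p) :
  y = x - alpha *: z - alpha *: ax ->
  dfe_potential alpha 1 y ay x z =
    (dotv (y - x) (y - x) - alpha ^+ 2 * dotv (ay - ax) (ay - ax)) / 2.
Proof. by move=> ->; rewrite /dfe_potential; by_coords; field. Qed.

Lemma dfe_potential_init p (alpha r : R) (x0 xs X g : 'rV[R]_p) : r != 0 ->
  dotv (x0 - xs) (x0 - xs) - alpha ^+ 2 * r ^+ 2 / 4 * dotv g g =
    dotv (x0 - xs - (alpha * r / 2) *: g) (x0 - xs - (alpha * r / 2) *: g)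
    + r ^+ 2 * dfe_potential alpha r X g x0 0
    + alpha * r * dotv g (X - xs).
Proof. by move=> r_neq0; rewrite /dfe_potential; by_coords; field. Qed.

End InnerProduct.

Section GradientInequality.
Variable R : realType.
Implicit Types p : nat.

Lemma is_gradientN p (f : 'rV[R]_p -> R) g x :
  is_gradient f g x -> is_gradient (fun y => - f y) (- g) x.
Proof.
move=> grad_f eps eps_gt0; have [d d_gt0 Hd] := grad_f eps eps_gt0.
exists d => // h /Hd; rewrite dotvNl.
have -> : - f (x + h) - - f x - - dotv g h = - (f (x + h) - f x - dotv g h) by ring.
by rewrite normrN.
Qed.

Lemma is_gradient_along p (f : 'rV[R]_p -> R) g x h e :
  is_gradient f g x -> 0 < e ->
  exists2 t, 0 < t <= 1 & `|f (x + t *: h) - f x - t * dotv g h| <= e * t.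
Proof.
move=> grad_f e_gt0; have nh_ge0 := enorm_ge0 h.
have nh1_gt0 : 0 < enorm h + 1 by lra.
have [d d_gt0 Hd] := grad_f (e / (enorm h + 1)) (divr_gt0 e_gt0 nh1_gt0).
pose t := Num.min 1 (d / (enorm h + 1)).
have t_gt0 : 0 < t by rewrite lt_min ltr01 divr_gt0.
have t_le1 : t <= 1 by rewrite ge_min lexx.
have t_le : t <= d / (enorm h + 1) by rewrite ge_min lexx orbT.
exists t; first by rewrite t_gt0 t_le1.
have th_lt : enorm (t *: h) < d.
  rewrite enormZ; last exact: ltW.
  apply: (le_lt_trans (ler_wpM2r nh_ge0 t_le)).
  by rewrite mulrAC ltr_pdivrMr //; nra.
have := Hd _ th_lt; rewrite enormZ ?dotvZr; last exact: ltW.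
have q_gt0 : 0 < e / (enorm h + 1) by rewrite divr_gt0.
have qE : e / (enorm h + 1) * (enorm h + 1) = e by field; lra.
nra.
Qed.

Lemma is_gradient_le_secant p (f : 'rV[R]_p -> R) g x h :
  is_gradient f g x ->
  (forall t, 0 < t <= 1 -> f (x + t *: h) - f x <= t * (f (x + h) - f x)) ->
  dotv g h <= f (x + h) - f x.
Proof.
move=> grad_f secant; apply/ler_addgt0Pr => e e_gt0.
have [t /andP[t_gt0 t_le1]] := is_gradient_along h grad_f e_gt0.
rewrite ler_norml => /andP[approx_t _].
have := secant t; rewrite t_gt0 t_le1 => /(_ isT) secant_t.
rewrite -(ler_pM2l t_gt0); nra.
Qed.

Lemma convex_secant p (f : 'rV[R]_p -> R) a d t :
  convex_fun f -> 0 <= t <= 1 -> f (a + t *: d) - f a <= t * (f (a + d) - f a).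
Proof.
move=> cvx_f /andP[t_ge0 t_le1]; have := cvx_f (a + d) a t t_ge0 t_le1.
have -> : t *: (a + d) + (1 - t) *: a = a + t *: d by apply/rowP => i; rewrite !mxE; ring.
lra.
Qed.

Variables (n m : nat) (L : 'rV[R]_n -> 'rV[R]_m -> R).

Lemma joint_shift_l x d t :
  joint L (x + t *: row_mx d 0) = L (lsubmx x + t *: d) (rsubmx x).
Proof. by rewrite /joint !linearD !linearZ /= row_mxKl row_mxKr scaler0 addr0. Qed.

Lemma joint_shift_r x d t :
  joint L (x + t *: row_mx 0 d) = L (lsubmx x) (rsubmx x + t *: d).
Proof. by rewrite /joint !linearD !linearZ /= row_mxKl row_mxKr scaler0 addr0. Qed.

Lemma gradient_le_convex_l gx x d :
  is_gradient (joint L) gx x -> convex_fun (fun u => L u (rsubmx x)) ->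
  dotv (lsubmx gx) d <= L (lsubmx x + d) (rsubmx x) - L (lsubmx x) (rsubmx x).
Proof.
move=> grad_L cvx_L.
have shift1 : joint L (x + row_mx d 0) = L (lsubmx x + d) (rsubmx x).
  by rewrite -[row_mx d 0]scale1r joint_shift_l scale1r.
have -> : dotv (lsubmx gx) d = dotv gx (row_mx d 0).
  by rewrite -{2}[gx]hsubmxK dotv_row_mx dotv0r addr0.
rewrite -shift1 -[L _ (rsubmx x)]/(joint L x).
apply: (is_gradient_le_secant grad_L) => t /andP[t_gt0 t_le1].
rewrite joint_shift_l shift1 /joint.
by apply: (convex_secant _ _ cvx_L); rewrite (ltW t_gt0) t_le1.
Qed.

Lemma gradient_ge_concave_r gx x d :
  is_gradient (joint L) gx x -> concave_fun (fun v => L (lsubmx x) v) ->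
  L (lsubmx x) (rsubmx x + d) - L (lsubmx x) (rsubmx x) <= dotv (rsubmx gx) d.
Proof.
move=> grad_L ccv_L.
have shift1 : joint L (x + row_mx 0 d) = L (lsubmx x) (rsubmx x + d).
  by rewrite -[row_mx 0 d]scale1r joint_shift_r scale1r.
have -> : dotv (rsubmx gx) d = dotv gx (row_mx 0 d).
  by rewrite -{2}[gx]hsubmxK dotv_row_mx dotv0r add0r.
rewrite -shift1 -[L _ (rsubmx x)]/(joint L x) -lerN2 -dotvNl.
rewrite opprB addrC -[joint L x]opprK.
apply: (is_gradient_le_secant (is_gradientN grad_L)) => t /andP[t_gt0 t_le1].
rewrite joint_shift_r shift1 /joint.
by apply: (convex_secant _ _ ccv_L); rewrite (ltW t_gt0) t_le1.
Qed.

End GradientInequality.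

Section SaddleOperator.
Variables (R : realType) (n m : nat) (L : 'rV[R]_n -> 'rV[R]_m -> R).
Variable G : 'rV[R]_(n + m) -> 'rV[R]_(n + m).
Hypothesis L_cc : convex_concave L.
Hypothesis G_grad : forall x, is_gradient (joint L) (G x) x.

Local Notation A := (saddle_op G).

Lemma saddle_op_gap x y :
  L (lsubmx x) (rsubmx y) - L (lsubmx y) (rsubmx x) <= dotv (A x) (x - y).
Proof.
have [L_cvx L_ccv] := L_cc.
have := gradient_le_convex_l (lsubmx y - lsubmx x) (G_grad x) (L_cvx _).
have := gradient_ge_concave_r (rsubmx y - rsubmx x) (G_grad x) (L_ccv _).
rewrite !subrKC -[x - y]hsubmxK /saddle_op dotv_row_mx !linearB /=.
rewrite !dotvBr !dotvNl; lra.
Qed.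

Lemma saddle_op_monotone x y : 0 <= dotv (A x - A y) (x - y).
Proof.
have := saddle_op_gap x y; have := saddle_op_gap y x.
rewrite dotvBl !dotvBr; lra.
Qed.

Lemma saddle_op_saddle_point xs x : saddle_point L xs -> 0 <= dotv (A x) (x - xs).
Proof.
move=> /(_ (lsubmx x) (rsubmx x)) [sp_v sp_u].
have := saddle_op_gap x xs; lra.
Qed.

Lemma enorm_saddle_op x : enorm (A x) = enorm (G x).
Proof. by rewrite enorm_row_mxN hsubmxK. Qed.

Lemma saddle_op_lipschitz (Lc alpha : R) :
  0 < Lc -> (forall x y, enorm (G x - G y) <= Lc * enorm (x - y)) ->
  0 < alpha -> alpha <= 1 / Lc ->
  forall x y, alpha * enorm (A x - A y) <= enorm (x - y).
Proof.
move=> Lc_gt0 G_lip alpha_gt0 alpha_le x y.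
have -> : A x - A y = row_mx (lsubmx (G x - G y)) (- rsubmx (G x - G y)).
  by rewrite /saddle_op opp_row_mx add_row_mx !linearB /=.
rewrite enorm_row_mxN hsubmxK.
have alphaLc_le1 : alpha * Lc <= 1 by rewrite -ler_pdivlMr.
have := G_lip x y; have := enorm_ge0 (x - y); have := enorm_ge0 (G x - G y); nra.
Qed.

End SaddleOperator.

Section DualFastExtragradient.
Variables (R : realType) (p : nat) (A : 'rV[R]_p -> 'rV[R]_p) (alpha : R).
Variables (N : nat) (x0 xs : 'rV[R]_p).
Hypothesis alpha_gt0 : 0 < alpha.
Hypothesis A_monotone : forall x y, 0 <= dotv (A x - A y) (x - y).
Hypothesis A_lipschitz : forall x y, alpha * enorm (A x - A y) <= enorm (x - y).
Hypothesis xs_minty : forall x, 0 <= dotv (A x) (x - xs).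
Hypothesis N_gt0 : (0 < N)%N.

Local Notation x_ k := (dfe A alpha N x0 k).1.
Local Notation z_ k := (dfe A alpha N x0 k).2.
Local Notation xN := (x_ N).
Local Notation Psi k := (dfe_potential alpha (N - k)%:R xN (A xN) (x_ k) (z_ k)).

Lemma lipschitz_sqr x y :
  alpha ^+ 2 * dotv (A x - A y) (A x - A y) <= dotv (x - y) (x - y).
Proof.
rewrite -!enorm_sqr -exprMn ler_sqr ?A_lipschitz // nnegrE ?enorm_ge0 //.
by rewrite mulr_ge0 ?enorm_ge0 ?ltW.
Qed.

Lemma dfe_potential_decreasing k : (k.+1 < N)%N -> Psi k.+1 <= Psi k.
Proof.
move=> lt_k1N.
have c_eq : ((N - k - 1)%:R : R) = (N - k)%:R - 1 by rewrite natrB //; lia.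
have r1_eq : ((N - k.+1)%:R : R) = (N - k)%:R - 1 by rewrite -c_eq subnS subn1.
have r_ge2 : (2 : R) <= (N - k)%:R by rewrite (ler_nat R 2); lia.
have r_neq0 : ((N - k)%:R : R) != 0 by apply/eqP => r0; lra.
have r1_neq0 : ((N - k)%:R : R) - 1 != 0 by apply/eqP => r0; lra.
set y := x_ k - alpha *: z_ k - alpha *: A (x_ k).
rewrite /= c_eq r1_eq [X in _ <= X](@dfe_potential_step _ _ alpha _ xN (A xN)
  _ _ y (A (x_ k)) (A y) r_neq0 r1_neq0 erefl) -/y.
set P := dfe_potential _ _ _ _ _ _.
rewrite -addrA lerDl; apply: addr_ge0; apply: divr_ge0.
- by rewrite subr_ge0 lipschitz_sqr.
- by rewrite mulr_ge0 ?sqr_ge0.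
- by rewrite mulr_ge0 ?A_monotone ?ltW.
- by rewrite mulr_ge0 //; lra.
Qed.

Lemma dfe_potential_last_ge0 : 0 <= Psi N.-1.
Proof.
have N_eq : N = N.-1.+1 by lia.
set k := N.-1 in N_eq *.
have xN_eq : xN = x_ k - alpha *: z_ k - alpha *: A (x_ k).
  by rewrite N_eq /= subSnn subnn !mul0r scale0r subr0.
rewrite (_ : (N - k = 1)%N); last by lia.
rewrite xN_eq (dfe_potential_last _ erefl) divr_ge0 // subr_ge0.
exact: lipschitz_sqr.
Qed.

Lemma dfe_potential0_ge0 : 0 <= Psi 0.
Proof.
suff Psi_ge0 j : forall k, (k + j).+1 = N -> 0 <= Psi k by apply: (Psi_ge0 N.-1); lia.
elim: j => [|j IHj] k kjN.
  by rewrite (_ : k = N.-1) ?dfe_potential_last_ge0 //; lia.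
apply: le_trans (IHj k.+1 _) (dfe_potential_decreasing _); lia.
Qed.

Theorem dfe_rate :
  enorm (A xN) ^+ 2 <= 4 * enorm (x0 - xs) ^+ 2 / (alpha ^+ 2 * N%:R ^+ 2).
Proof.
have N_pos : (0 : R) < N%:R by rewrite ltr0n.
have := dfe_potential_init alpha x0 xs xN (A xN) (lt0r_neq0 N_pos).
have := dfe_potential0_ge0; rewrite subn0 /= => Psi0_ge0.
have := dotv_ge0 (x0 - xs - (alpha * N%:R / 2) *: A xN).
have := mulr_ge0 (mulr_ge0 (ltW alpha_gt0) (ltW N_pos)) (xs_minty xN).
have := mulr_ge0 (sqr_ge0 (N%:R : R)) Psi0_ge0.
rewrite !enorm_sqr ler_pdivlMr; last by rewrite mulr_gt0 ?exprn_gt0.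
lra.
Qed.

End DualFastExtragradient.

Theorem theorem6p1 (R : realType) (n m : nat)
  (L : 'rV[R]_n -> 'rV[R]_m -> R) (G : 'rV[R]_(n + m) -> 'rV[R]_(n + m))
  (Lc alpha : R) (N : nat) (x0 xs : 'rV[R]_(n + m)) :
  convex_concave L ->
  (forall x, is_gradient (joint L) (G x) x) ->
  0 < Lc ->
  (forall x y, enorm (G x - G y) <= Lc * enorm (x - y)) ->
  (1 <= N)%N -> 0 < alpha -> alpha <= 1 / Lc ->
  saddle_point L xs ->
  let xN := (dfe (saddle_op G) alpha N x0 N).1 in
  enorm (G xN) ^+ 2 = enorm (saddle_op G xN) ^+ 2 /\
  enorm (saddle_op G xN) ^+ 2
    <= 4 * enorm (x0 - xs) ^+ 2 / (alpha ^+ 2 * (N%:R) ^+ 2).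
Proof.
move=> L_cc G_grad Lc_gt0 G_lip N_ge1 alpha_gt0 alpha_le xs_saddle xN.
split; first by rewrite enorm_saddle_op.
apply: dfe_rate => //.
- exact: saddle_op_monotone L_cc G_grad.
- exact: saddle_op_lipschitz Lc_gt0 G_lip alpha_gt0 alpha_le.
- by move=> x; apply: saddle_op_saddle_point L_cc G_grad _ _ xs_saddle.
Qed.
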